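(* Let $(X,T)$ be a minimal system and $d\ge2$. Then there is a dense $G_\delta$ subset $X_0\subset X$ such that for every $x\in X_0$, $\{(x_1,\dots,x_d)\in N_d(X):x_1=x\}=\{x\}\times L_x$, where $L_x=\overline{\{(T^nx,T^{2n}x,\dots,T^{(d-1)n}x):n\in\mathbb{Z}\}}$ is the orbit closure of $(x,\dots,x)\in X^{d-1}$ under $T\times T^2\times\cdots\times T^{d-1}$.
   Context: $N_d(X)=\overline{\{(T^{p+q}x,\dots,T^{p+dq}x):x\in X,p,q\in\mathbb{Z}\}}\subset X^d$. *)

From HB Require Import structures.
From mathcomp Require Import all_boot all_order all_algebra.
From mathcomp Require Import all_classical all_reals all_analysis.
Set Implicit Arguments. Unset Strict Implicit. Unset Printing Implicit Defensive.
Import Order.TTheory GRing.Theory Num.Theory.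
Local Open Scope classical_set_scope.
Local Open Scope ring_scope.

Section Defs.
Context {X : Type}.

(* T^n for n : int, where Ti is the inverse of T *)
Definition iterz (T Ti : X -> X) (n : int) : X -> X :=
  match n with Posz k => iter k T | Negz k => iter k.+1 Ti end.

Definition orbitz (T Ti : X -> X) (x : X) : set X :=
  [set y | exists n : int, y = iterz T Ti n x].
End Defs.

Definition tds {R : realType} (X : metricType R) (T Ti : X -> X) : Prop :=
  [/\ compact [set: X], continuous T, continuous Ti,
      cancel T Ti & cancel Ti T].

Definition minimal_sys {R : realType} (X : metricType R) (T Ti : X -> X) : Prop :=
  tds T Ti /\ forall x : X, closure (orbitz T Ti x) = [set: X].

Definition dense_Gdelta (Y : topologicalType) (A : set Y) : Prop :=
  dense A /\ exists U : nat -> set Y,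
    (forall n, open (U n)) /\ A = \bigcap_n U n.

(* N_d(X) = closure {(T^{p+q}x, T^{p+2q}x, ..., T^{p+dq}x)} in X^d,
   coordinate i : 'I_d being T^{p+(i+1)q} x; product topology on X^d *)
Definition Nd {R : realType} (X : metricType R) (T Ti : X -> X) (d : nat)
  : set {ptws 'I_d -> X} :=
  closure [set z : {ptws 'I_d -> X} | exists (x : X) (p q : int),
     z = (fun i : 'I_d => iterz T Ti (p + (i.+1)%:Z * q) x)].

(* L_x = closure {(T^n x, T^{2n} x, ..., T^{(d-1)n} x) : n in Z} in X^(d-1),
   coordinate j : 'I_(d.-1) being T^{(j+1)n} x *)
Definition Lx {R : realType} (X : metricType R) (T Ti : X -> X) (d : nat) (x : X)
  : set {ptws 'I_d.-1 -> X} :=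
  closure [set w : {ptws 'I_d.-1 -> X} | exists n : int,
     w = (fun j : 'I_d.-1 => iterz T Ti ((j.+1)%:Z * n) x)].

Lemma tail_ord_proof d (j : 'I_d.-1) : (j.+1 < d)%N.
Proof. by rewrite -ltn_predRL ltn_ord. Qed.

Definition tailf {X : Type} d (z : 'I_d -> X) : 'I_d.-1 -> X :=
  fun j => z (Ordinal (tail_ord_proof j)).

Arguments Nd {R X} T Ti d _.
Arguments Lx {R X} T Ti d x _.
Arguments tailf {X d} z _.

From HB Require Import structures.
From mathcomp Require Import all_boot all_order all_algebra.
From mathcomp Require Import all_classical all_reals all_analysis.
From mathcomp Require Import zify ring lra.
Import Order.TTheory GRing.Theory Num.Theory.
Local Open Scope classical_set_scope.
Local Open Scope ring_scope.

(* Write f_n x = (T^n x, T^2n x, ..., T^(d-1)n x).  A point of N_d(X) with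
   first coordinate x is a limit of tuples (T^(p+q) y, ..., T^(p+dq) y), i.e.
   of pairs (x', f_q x') with x' = T^(p+q) y tending to x.  Fix a countable
   basis (V_k) of X^(d-1) and call x generic if for every k either some f_n x
   lies in V_k or x is not in the closure of the set of points some f_n-image
   of which lies in V_k.  Generic points form a countable intersection of dense
   open sets, hence a dense G_delta by Baire's theorem, and at a generic x every
   such limit lies in the orbit closure L_x.  Conversely {x} x L_x lies in
   N_d(X) by taking p = -q. *)

Section iterz_algebra.
Context {X : Type} (T Ti : X -> X).
Hypotheses (TK : cancel T Ti) (TiK : cancel Ti T).

Lemma iterzS (n : int) y : iterz T Ti (n + 1) y = T (iterz T Ti n y).
Proof.
case: n => [k|[|k]]; first by rewrite /= addn1.
  by rewrite /= TiK.
have -> : Negz k.+1 + 1 = Negz k by rewrite !NegzE; lia.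
by rewrite /= TiK.
Qed.

Lemma iterzN1 (n : int) y : iterz T Ti (n - 1) y = Ti (iterz T Ti n y).
Proof. by rewrite -[in RHS](subrK 1 n) iterzS TK. Qed.

Lemma iterzD (a b : int) y : iterz T Ti (a + b) y = iterz T Ti a (iterz T Ti b y).
Proof.
case: a => k; elim: k => [|k IHk].
- by rewrite add0r.
- by rewrite -addn1 PoszD addrAC iterzS IHk -iterzS.
- by rewrite NegzE addrC iterzN1.
- have -> : Negz k.+1 + b = Negz k + b - 1 by rewrite !NegzE; lia.
  by rewrite iterzN1 IHk.
Qed.

End iterz_algebra.

Lemma continuous_iterz {X : topologicalType} (T Ti : X -> X) :
  continuous T -> continuous Ti -> forall n : int, continuous (iterz T Ti n).
Proof.
move=> cT cTi [k|k] /=; elim: k => [|k IHk] x //=.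
- exact: continuous_comp (IHk x) (cT _).
- exact: continuous_comp (IHk x) (cTi _).
Qed.

Section ptws_cylinder.
Context {I : eqType} {Y : topologicalType}.

Definition cylinder (W : I -> set Y) : set {ptws I -> Y} :=
  [set w | forall i, W i (w i)].

Lemma nbhs_ptws_cylinder (f : {ptws I -> Y}) (B : set {ptws I -> Y}) :
  nbhs f B ->
  exists2 W : I -> set Y, (forall i, nbhs (f i) (W i)) & cylinder W `<=` B.
Proof.
pose F := filter_from [set W | forall i, nbhs (f i) (W i)] cylinder.
have FF : Filter F.
  apply: filter_from_filter; first by exists (fun=> setT) => i; exact: filterT.
  move=> W1 W2 W1f W2f; exists (fun i => W1 i `&` W2 i).
    by move=> i; exact: filterI.
  by move=> w Ww; split=> i; have [] := Ww i.
suff /(_ B) Ff : F --> f by move=> /Ff [W Wf WB]; exists W.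
apply/cvg_sup => i A [C [[D oD DC] Cf] CA]; rewrite nbhs_filterE.
move: Cf CA; rewrite -DC => Dfi DA.
exists (fun j => if j == i then D else setT).
  move=> j; case: eqP => [->|_]; last exact: filterT.
  exact: open_nbhs_nbhs.
by move=> w /(_ i); rewrite eqxx => Dwi; exact: DA.
Qed.

End ptws_cylinder.

Section ptws_finite.
Context {I : finType} {Y : topologicalType}.

Lemma cylinder_nbhs (f : {ptws I -> Y}) (W : I -> set Y) :
  (forall i, nbhs (f i) (W i)) -> nbhs f (cylinder W).
Proof.
move=> Wf.
have Wi i : nbhs f (fun w : {ptws I -> Y} => W i (w i)).
  exact: (@proj_continuous I (fun=> Y) i f _ (Wf i)).
exact: filter_forall _ Wi.
Qed.

Lemma open_cylinder (W : I -> set Y) :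
  (forall i, open (W i)) -> open (cylinder W).
Proof.
move=> oW; rewrite openE => w Ww; apply: cylinder_nbhs => i.
exact: open_nbhs_nbhs.
Qed.

Lemma continuous_ptws {Z : topologicalType} (g : Z -> {ptws I -> Y}) :
  (forall i, continuous (fun z => g z i)) -> continuous g.
Proof.
move=> gc z B /nbhs_ptws_cylinder [W Wg WB].
have Wi i : nbhs z (fun z' => W i (g z' i)) by exact: gc i z _ (Wg i).
suff : nbhs z (g @^-1` B) by [].
by apply: filterS _ (filter_forall _ Wi) => z' /WB.
Qed.

End ptws_finite.

Lemma continuous_tailf {Y : topologicalType} (d : nat) :
  continuous (tailf : {ptws 'I_d -> Y} -> {ptws 'I_d.-1 -> Y}).
Proof. by apply: continuous_ptws => j; exact: proj_continuous. Qed.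

Definition second_countable (Y : topologicalType) : Prop :=
  exists (K : countType) (V : K -> set Y), (forall k, open (V k)) /\
    forall y B, nbhs y B -> exists2 k, V k y & V k `<=` B.

Lemma second_countable_ptws (I : finType) (Y : topologicalType) :
  second_countable Y -> second_countable {ptws I -> Y}.
Proof.
move=> [K [V [oV VB]]].
exists {ffun I -> K}, (fun kf : {ffun I -> K} => cylinder (fun i => V (kf i))).
split.
  by move=> kf; apply: open_cylinder.
move=> y B /nbhs_ptws_cylinder [W Wy WB].
have /choice [g gW] : forall i, exists k, V k (y i) /\ V k `<=` W i.
  by move=> i; have [k Vk VkW] := VB _ _ (Wy i); exists k.
exists [ffun i => g i] => [i|w Vw]; rewrite ?ffunE; first by case: (gW i).
by apply: WB => i; have := Vw i; rewrite ffunE => /(gW i).2.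
Qed.

Section compact_metric.
Context {R : realType} {X : metricType R}.

Lemma metric_ball_open (c : X) (r : R) : open (ball c r).
Proof.
rewrite openE => y; rewrite /interior ballEmdist /= => cy.
apply/nbhs_ballP; exists (r - mdist c y); first by rewrite /= subr_gt0.
move=> u; rewrite /= ballEmdist /= => yu.
by apply: le_lt_trans (metric_triangle c y u) _; rewrite -ltrBrDl.
Qed.

Lemma compact_ball_cover (r : R) : compact [set: X] -> 0 < r ->
  exists s : seq X, forall y, exists2 c, c \in s & ball c r y.
Proof.
move=> cpt r0; apply: contrapT => nocover.
pose G := filter_from [set: seq X]
  (fun s => [set y : X | forall c, c \in s -> ~ ball c r y]).
have FG : Filter G.
  apply: filter_from_filter; first by exists [::].
  move=> s t _ _; exists (s ++ t) => // y /= sty.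
  by split=> c cs; apply: sty; rewrite mem_cat cs ?orbT.
have PG : ProperFilter G.
  apply: filter_from_proper => s _; apply: contrapT => s0; apply: nocover.
  exists s => y; apply: contrapT => ny; apply: s0; exists y => c cs cy.
  by apply: ny; exists c.
have [p [_ clp]] := cpt G PG filterT.
have [|y [/= ny py]] := clp [set y | forall c, c \in [:: p] -> ~ ball c r y]
  (ball p r) _ (nbhsx_ballx p r r0); first by exists [:: p].
by apply: (ny p); rewrite ?inE.
Qed.

Lemma compact_metric_second_countable :
  compact [set: X] -> second_countable X.
Proof.
move=> cpt; pose rad (m : nat) : R := m.+1%:R^-1.
have /choice [S SX] : forall m, exists s : seq X,
    forall y, exists2 c, c \in s & ball c (rad m) y.
  by move=> m; apply: compact_ball_cover; rewrite // invr_gt0.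
exists {m : nat & seq_sub (S m)},
  (fun k => ball (ssval (projT2 k)) (rad (projT1 k))).
split=> [k|y B /nbhs_ballP [e /= e0 yeB]]; first exact: metric_ball_open.
have e20 : 0 < e / 2 by rewrite divr_gt0.
have [m _ /(_ m (leqnn _)) me] := near_infty_natSinv_lt (PosNum e20).
have {}me : rad m < e / 2 := me.
have [c cS cy] := SX m y.
exists (existT _ m (SeqSub cS)) => //= u cu; apply: yeB.
by apply: le_ball (ball_triangle (ball_sym cy) cu); lra.
Qed.

End compact_metric.

Section Baire_compact.
Context {T : topologicalType}.
Hypotheses (cptT : compact [set: T]) (regT : regular_space T).

Lemma dense_open_shrink {U W : set T} : open U -> dense U -> open W -> W !=set0 ->
  exists V : set T, [/\ open V, V !=set0 & closure V `<=` W `&` U].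
Proof.
move=> oU dU oW W0; have [a [Wa Ua]] := dU W W0 oW.
have : nbhs a (W `&` U) by apply: open_nbhs_nbhs; split; [exact: openI|].
move=> /(regT a) [N Na NWU]; exists N°; split; first exact: open_interior.
  by exists a.
by apply: subset_trans NWU; apply: closureS; exact: interior_subset.
Qed.

Lemma Baire_compact_regular (U : nat -> set T) :
  (forall n, open (U n)) -> (forall n, dense (U n)) -> dense (\bigcap_n U n).
Proof.
move=> oU dU O O0 oO.
have /choice [g gP] : forall nW : nat * set T, exists V : set T,
    open nW.2 /\ nW.2 !=set0 ->
    [/\ open V, V !=set0 & closure V `<=` nW.2 `&` U nW.1].
  move=> [n W]; have [[oW W0]|nW] := pselect (open W /\ W !=set0); last first.
    by exists set0.
  by have [V VP] := dense_open_shrink (oU n) (dU n) oW W0; exists V.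
pose V := fix V n := if n is m.+1 then g (m, V m) else O.
have VP n : open (V n) /\ V n !=set0.
  by elim: n => [|n [oVn Vn0]] //=; have [] := gP (n, V n) (conj oVn Vn0).
have VS n : closure (V n.+1) `<=` V n `&` U n by have [] := gP (n, V n) (VP n).
have Vdecr n m : (n <= m)%N -> V m `<=` V n.
  elim: m => [|m IHm]; first by rewrite leqn0 => /eqP ->.
  rewrite leq_eqVlt => /predU1P [-> //|/IHm Vmn x Vx].
  by apply: Vmn; have [] := VS m x (subset_closure Vx).
pose F := filter_from [set: nat] V.
have FF : ProperFilter F.
  apply: filter_from_proper; last by move=> n _; have [] := VP n.
  apply: filter_from_filter; first by exists 0%N.
  move=> n m _ _; exists (maxn n m) => // x Vx.
  by split; apply: Vdecr Vx; rewrite ?leq_maxl ?leq_maxr.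
have [p [_ clp]] := cptT F FF filterT.
have pV n : closure (V n) p by rewrite clusterE in clp; apply: clp; exists n.
exists p; split; first by have [] := VS 0%N p (pV 1%N).
by move=> n _; have [] := VS n p (pV n.+1).
Qed.

Lemma dense_Gdelta_bigcap (K : countType) (U : K -> set T) :
  (forall k, open (U k)) -> (forall k, dense (U k)) ->
  dense_Gdelta (\bigcap_k U k).
Proof.
move=> oU dU; pose U' n := if unpickle n is Some k then U k else [set: T].
have -> : \bigcap_k U k = \bigcap_n U' n.
  apply/seteqP; split=> x Ux n _; last by have := Ux (pickle n) I; rewrite /U' pickleK.
  by rewrite /U'; case: (unpickle n) => // k; exact: Ux.
have oU' n : open (U' n).
  by rewrite /U'; case: (unpickle n) => [k|]; [exact: oU | exact: openT].
split; last by exists U'.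
apply: Baire_compact_regular => // n; rewrite /U'.
by case: (unpickle n) => [k|O [x Ox] _]; [exact: dU | exists x].
Qed.

End Baire_compact.

Lemma open_setU_closureC {T : topologicalType} (O : set T) :
  open O -> open (O `|` ~` closure O).
Proof. by move=> oO; apply: openU => //; exact/closed_openC/closed_closure. Qed.

Lemma dense_setU_closureC {T : topologicalType} (O : set T) :
  dense (O `|` ~` closure O).
Proof.
move=> W [a Wa] oW; have [[b [Wb Ob]]|WO] := pselect (W `&` O !=set0).
  by exists b; split=> //; left.
exists a; split=> //; right => /(_ W (open_nbhs_nbhs (conj oW Wa))).
by rewrite setIC.
Qed.

Section generic_points.
Context {X Y : topologicalType} {I : Type} (f : I -> X -> Y).

Definition hitting (V : set Y) : set X := [set x | exists i, V (f i x)].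

Lemma open_hitting (V : set Y) :
  (forall i, continuous (f i)) -> open V -> open (hitting V).
Proof.
move=> fc oV; rewrite openE => x [i Vfx].
have : nbhs x (f i @^-1` V) := fc i x V (open_nbhs_nbhs (conj oV Vfx)).
by apply: filterS => y Vfy; exists i.
Qed.

Context {K : countType} (V : K -> set Y).
Hypothesis oV : forall k, open (V k).

Definition generic_point (x : X) : Prop :=
  forall k, (hitting (V k) `|` ~` closure (hitting (V k))) x.

Lemma dense_Gdelta_generic_point : compact [set: X] -> regular_space X ->
  (forall i, continuous (f i)) -> dense_Gdelta generic_point.
Proof.
move=> cpt reg fc.
have -> : generic_point = \bigcap_k (hitting (V k) `|` ~` closure (hitting (V k))).
  by apply/seteqP; split=> x gx k //; exact: gx.
apply: dense_Gdelta_bigcap => // k; last exact: dense_setU_closureC.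
exact/open_setU_closureC/open_hitting.
Qed.

Lemma generic_point_orbit_closure (x : X) (y : Y) :
  (forall w B, nbhs w B -> exists2 k, V k w & V k `<=` B) ->
  generic_point x ->
  (forall W B, nbhs x W -> nbhs y B -> exists x' i, W x' /\ B (f i x')) ->
  closure [set w | exists i, w = f i x] y.
Proof.
move=> VB gx xy B /VB [k Vky VkB].
have [[i Vfx]|nx] := gx k; first by exists (f i x); split; [exists i|exact: VkB].
exfalso; apply: nx => W xW.
have [x' [i [Wx' Vfx']]] := xy W (V k) xW (open_nbhs_nbhs (conj (oV k) Vky)).
by exists x'; split=> //; exists i.
Qed.

End generic_points.

Lemma ord_head_or_tail (d : nat) (i : 'I_d) :
  val i = 0%N \/ exists j : 'I_d.-1, i = Ordinal (tail_ord_proof j).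
Proof.
case: i => [[|j] jd]; [by left|right].
have jd' : (j < d.-1)%N by rewrite -ltnS prednK // (leq_ltn_trans _ jd).
by exists (Ordinal jd'); apply: val_inj.
Qed.

Section multiple_recurrence.
Context {R : realType} {X : metricType R} (T Ti : X -> X).
Hypotheses (TK : cancel T Ti) (TiK : cancel Ti T).

Definition diag_orbit (k : nat) (n : int) (x : X) : {ptws 'I_k -> X} :=
  fun j => iterz T Ti ((j.+1)%:Z * n) x.

Definition ap_orbit (d : nat) (x : X) (p q : int) : {ptws 'I_d -> X} :=
  fun i => iterz T Ti (p + (i.+1)%:Z * q) x.

Lemma ap_orbit_head d x p q (i : 'I_d) :
  val i = 0%N -> ap_orbit d x p q i = iterz T Ti (p + q) x.
Proof. by rewrite /ap_orbit => ->; rewrite mul1r. Qed.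

Lemma tailf_ap_orbit d x p q :
  tailf (ap_orbit d x p q) = diag_orbit d.-1 q (iterz T Ti (p + q) x).
Proof.
apply/funext => j; rewrite /tailf /ap_orbit /diag_orbit /= -iterzD //.
by congr iterz; rewrite -addn1 PoszD; ring.
Qed.

Lemma Nd_head_tail_approx d x (z : {ptws 'I_d -> X}) : (0 < d)%N ->
  Nd T Ti d z -> (forall i : 'I_d, val i = 0%N -> z i = x) ->
  forall W B, nbhs x W -> nbhs (tailf z : {ptws 'I_d.-1 -> X}) B ->
  exists x' n, W x' /\ B (diag_orbit d.-1 n x').
Proof.
move=> d0 Nz zx W B xW zB; pose i0 := Ordinal d0.
have : nbhs z [set z' : {ptws 'I_d -> X} | W (z' i0) /\ B (tailf z')].
  apply: filterI; last exact: continuous_tailf zB.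
  by apply: (@proj_continuous _ (fun=> X) i0 z); rewrite /proj zx.
move=> /Nz [_ [[y [p [q ->]]] [Wy By]]].
exists (iterz T Ti (p + q) y), q; split.
  by rewrite -(ap_orbit_head d y p q i0 erefl).
by rewrite -tailf_ap_orbit.
Qed.

Lemma Nd_of_Lx d x (z : {ptws 'I_d -> X}) :
  (forall i : 'I_d, val i = 0%N -> z i = x) -> Lx T Ti d x (tailf z) ->
  Nd T Ti d z.
Proof.
move=> zx Lz B /nbhs_ptws_cylinder [W Wz WB].
have /Lz [_ [[n ->] Wn]] := cylinder_nbhs (tailf z : {ptws 'I_d.-1 -> X})
  (fun j => W (Ordinal (tail_ord_proof j))) (fun j => Wz _).
exists (ap_orbit d x (- n) n); split; first by exists x; exists (- n); exists n.
apply: WB => i; have [i0|[j ->]] := ord_head_or_tail _ i.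
  by rewrite ap_orbit_head // addNr -(zx i i0); exact: nbhs_singleton (Wz i).
have -> : ap_orbit d x (- n) n (Ordinal (tail_ord_proof j)) = diag_orbit d.-1 n x j.
  by rewrite -[LHS]/(tailf (ap_orbit d x (- n) n) j) tailf_ap_orbit addNr.
exact: Wn j.
Qed.

End multiple_recurrence.

Theorem lemma4p4 (R : realType) (X : metricType R) (T Ti : X -> X)
    (d : nat) :
  minimal_sys T Ti -> (2 <= d)%N ->
  exists X0 : set X, dense_Gdelta X0 /\
    forall x : X, X0 x ->
      [set z : {ptws 'I_d -> X} | Nd T Ti d z /\ forall i : 'I_d, val i = 0%N -> z i = x]
      = [set z : {ptws 'I_d -> X} | (forall i : 'I_d, val i = 0%N -> z i = x) /\
                                     Lx T Ti d x (tailf z)].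
Proof.
move=> [[cpt cT cTi TK TiK] _] d2; have d0 : (0 < d)%N by apply: ltnW.
pose f := diag_orbit T Ti d.-1.
have fc n : continuous (f n).
  by apply: continuous_ptws => j x; exact: continuous_iterz.
have [K [V [oV VB]]] :=
  second_countable_ptws 'I_d.-1 _ (compact_metric_second_countable cpt).
exists (generic_point f V); split.
  by apply: dense_Gdelta_generic_point => //; exact: uniform_regular.
move=> x gx; apply/seteqP; split=> z /= [].
  move=> Nz zx; split=> //.
  apply: (generic_point_orbit_closure _ _ oV _ _ VB gx).
  exact: Nd_head_tail_approx.
by move=> zx Lz; split=> //; apply: Nd_of_Lx Lz.
Qed.
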